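(* Let $n\ge2$, $k\in\{1,\ldots,n\}$, $r\in\mathbb{R}$, and $x^0\in\mathbb{R}^n$ with $x^0_1\ge\cdots\ge x^0_n$ and $\sum_{i=1}^k x^0_i>r$. Suppose that along the trajectory of the ESGS procedure a transition from $(k_0,k_1)$ to $(k_0,k_1+1)$ occurs. Then the optimal index pair $(\bar k_0,\bar k_1)$, i.e. the index pair satisfying all of $\mathtt{kkt}_1,\ldots,\mathtt{kkt}_5$, satisfies $\bar k_0\le k_0$ and $\bar k_1\ge k_1$.
   Context: Conventions: $x^0_0:=+\infty$, $x^0_{n+1}:=-\infty$. For $k_0\in\{0,\ldots,k-1\}$ and $k_1\in\{k,\ldots,n\}$ define $S_\alpha=\sum_{i=1}^{k_0}x^0_i-r$, $S_\beta=\sum_{i=k_0+1}^{k_1}x^0_i$, $\rho=k_0(k_1-k_0)+(k-k_0)^2$, $\theta(k_0,k_1)=(k_0S_\beta-(k-k_0)S_\alpha)/\rho$, $\lambda(k_0,k_1)=((k-k_0)S_\beta+(k_1-k_0)S_\alpha)/\rho$. KKT indicators: $\mathtt{kkt}_1$: $\lambda>0$; $\mathtt{kkt}_2$: $x^0_{k_0}>\theta+\lambda$; $\mathtt{kkt}_3$: $\theta+\lambda\ge x^0_{k_0+1}$; $\mathtt{kkt}_4$: $x^0_{k_1}\ge\theta$; $\mathtt{kkt}_5$: $\theta>x^0_{k_1+1}$. An index pair satisfying all five indicators yields the solution of the sorted projection problem. ESGS trajectory: start at $(k_0,k_1)=(k-1,k)$ and repeat: if $\mathtt{kkt}_2\wedge\mathtt{kkt}_5$,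 stop; else if $\mathtt{kkt}_2$, $k_1\gets k_1+1$; else $k_0\gets k_0-1$. *)

From HB Require Import structures.
From mathcomp Require Import all_boot all_order all_algebra.
Set Implicit Arguments. Unset Strict Implicit. Unset Printing Implicit Defensive.
Import Order.TTheory GRing.Theory Num.Theory.
Local Open Scope ring_scope.

Section ESGS.
Variables (R : realFieldType) (n k : nat) (r : R) (x : n.-tuple R).

(* 1-based access: xe i = x^0_i for 1 <= i <= n. *)
Definition xe (i : nat) : R := nth 0 x i.-1.

Definition S_alpha (k0 : nat) : R := \sum_(1 <= i < k0.+1) xe i - r.
Definition S_beta (k0 k1 : nat) : R := \sum_(k0.+1 <= i < k1.+1) xe i.
Definition rho (k0 k1 : nat) : R := (k0 * (k1 - k0) + (k - k0) ^ 2)%N%:R.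
Definition theta (k0 k1 : nat) : R :=
  (k0%:R * S_beta k0 k1 - (k - k0)%N%:R * S_alpha k0) / rho k0 k1.
Definition lambda (k0 k1 : nat) : R :=
  ((k - k0)%N%:R * S_beta k0 k1 + (k1 - k0)%N%:R * S_alpha k0) / rho k0 k1.

(* Conventions x^0_0 = +oo and x^0_{n+1} = -oo. *)
Definition kkt1 (k0 k1 : nat) : bool := 0 < lambda k0 k1.
Definition kkt2 (k0 k1 : nat) : bool :=
  (k0 == 0)%N || (theta k0 k1 + lambda k0 k1 < xe k0).
Definition kkt3 (k0 k1 : nat) : bool := xe k0.+1 <= theta k0 k1 + lambda k0 k1.
Definition kkt4 (k0 k1 : nat) : bool := theta k0 k1 <= xe k1.
Definition kkt5 (k0 k1 : nat) : bool :=
  (k1 == n)%N || (xe k1.+1 < theta k0 k1).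

Definition kkt_all (k0 k1 : nat) : bool :=
  [&& kkt1 k0 k1, kkt2 k0 k1, kkt3 k0 k1, kkt4 k0 k1 & kkt5 k0 k1].

(* Index pairs visited by the ESGS trajectory (before the stop test). *)
Inductive esgs_reach : nat -> nat -> Prop :=
| esgs_start : esgs_reach k.-1 k
| esgs_inc_k1 a b : esgs_reach a b -> kkt2 a b -> ~~ kkt5 a b -> esgs_reach a b.+1
| esgs_dec_k0 a b : esgs_reach a b -> ~~ kkt2 a b -> esgs_reach a.-1 b.

End ESGS.

(* Write mu := theta + lambda.  The pair (theta, mu) at (k0, k1) solves a 2x2
   linear system with determinant rho > 0, so for any trial pair (th, m) the
   errors rho * (theta - th) and rho * (mu - m) are explicit combinations of the
   two residuals of the system at (th, m).  Taking (th, m) optimal and using that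
   x^0 is sorted shows that theta(k0, kb1) >= theta(kb0, kb1) for k0 >= kb0 and
   mu(kb0, k1) <= mu(kb0, kb1) for k1 <= kb1.  Hence the trajectory never leaves
   kb0 <= k0, k1 <= kb1: raising k1 at k1 = kb1 would need
   theta(k0, kb1) <= x^0_(kb1+1) < theta(kb0, kb1) (kkt5), and lowering k0 at
   k0 = kb0 would need x^0_kb0 <= mu(kb0, k1) <= mu(kb0, kb1) < x^0_kb0 (kkt2).
   The bounds thus hold at every visited pair. *)

From HB Require Import structures.
From mathcomp Require Import all_boot all_order all_algebra.
From mathcomp Require Import ring lra zify.
Import Order.TTheory GRing.Theory Num.Theory.
Local Open Scope ring_scope.

Section KKTSystem.
Variables (R : realFieldType) (n k : nat) (r : R) (x : n.-tuple R).

Local Notation xe := (xe x).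
Local Notation theta := (theta k r x).
Local Notation lambda := (lambda k r x).
Local Notation rho := (rho R k).

Definition psum (j : nat) : R := \sum_(1 <= i < j.+1) xe i.

Definition mu (a b : nat) : R := theta a b + lambda a b.

Definition res_alpha (a : nat) (th m : R) : R :=
  psum a - a%:R * m + k%:R * th - r.

Definition res_beta (a b : nat) (th m : R) : R :=
  psum b - psum a - (b%:R - k%:R) * th - (k%:R - a%:R) * m.

Lemma S_beta_psum a b : (a <= b)%N -> S_beta x a b = psum b - psum a.
Proof.
by move=> leab; rewrite /psum (@big_cat_nat _ _ _ a.+1 1 b.+1) //= addrC addrK.
Qed.

Section LinearSystem.
Variables (a b : nat).
Hypotheses (lt_ak : (a < k)%N) (le_kb : (k <= b)%N).

Lemma rhoE : rho a b = a%:R * (b%:R - a%:R) + (k%:R - a%:R) ^+ 2.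
Proof. by rewrite /rho natrD natrM natrX !natrB //; lia. Qed.

Lemma rho_gt0 : 0 < rho a b.
Proof. by rewrite /rho ltr0n; nia. Qed.

Lemma res_alpha_opt : res_alpha a (theta a b) (mu a b) = 0.
Proof.
have rho_neq0 : rho a b != 0 by rewrite gt_eqF ?rho_gt0.
move: rho_neq0; rewrite /res_alpha /mu /theta /lambda S_beta_psum; last lia.
by rewrite /S_alpha -/(psum a) !natrB; try lia; rewrite rhoE => ?; field.
Qed.

Lemma res_beta_opt : res_beta a b (theta a b) (mu a b) = 0.
Proof.
have rho_neq0 : rho a b != 0 by rewrite gt_eqF ?rho_gt0.
move: rho_neq0; rewrite /res_beta /mu /theta /lambda S_beta_psum; last lia.
by rewrite /S_alpha -/(psum a) !natrB; try lia; rewrite rhoE => ?; field.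
Qed.

Lemma rho_theta_sub th m :
  rho a b * (theta a b - th)
    = a%:R * res_beta a b th m - (k%:R - a%:R) * res_alpha a th m.
Proof.
rewrite -[res_alpha a th m]subr0 -[res_beta a b th m]subr0.
rewrite -{2}res_alpha_opt -{1}res_beta_opt /res_alpha /res_beta rhoE; ring.
Qed.

Lemma rho_mu_sub th m :
  rho a b * (mu a b - m)
    = k%:R * res_beta a b th m + (b%:R - k%:R) * res_alpha a th m.
Proof.
rewrite -[res_alpha a th m]subr0 -[res_beta a b th m]subr0.
rewrite -{2}res_alpha_opt -{1}res_beta_opt /res_alpha /res_beta rhoE; ring.
Qed.

End LinearSystem.

Lemma S_beta_le m p c :
  (forall i, (m < i <= p)%N -> xe i <= c) -> S_beta x m p <= (p - m)%:R * c.
Proof.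
move=> le_xc; rewrite /S_beta -(subSS m p) mulr_natl -sumr_const_nat.
by apply: ler_sum_nat => i /andP[lt_mi lt_ip]; apply: le_xc; lia.
Qed.

Lemma S_beta_ge m p c :
  (forall i, (m < i <= p)%N -> c <= xe i) -> (p - m)%:R * c <= S_beta x m p.
Proof.
move=> le_cx; rewrite /S_beta -(subSS m p) mulr_natl -sumr_const_nat.
by apply: ler_sum_nat => i /andP[lt_mi lt_ip]; apply: le_cx; lia.
Qed.

Hypothesis x_sorted : forall i, (1 <= i < n)%N -> xe i.+1 <= xe i.

Lemma xe_le i j : (1 <= i <= j)%N -> (j <= n)%N -> xe j <= xe i.
Proof.
move=> /andP[i_gt0 le_ij] le_jn.
apply: (homo_leq_in (D := [pred i | 1 <= i <= n]%N) (f := xe)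
                    (r := fun u v => v <= u)) => //.
- by move=> y u z le_yu le_zy; apply: le_trans le_zy le_yu.
- move=> u v; rewrite !inE => /andP[u_gt0 _] /andP[_ le_vn] w /andP[lt_uw lt_wv].
  by apply/andP; lia.
- move=> u; rewrite !inE => /andP[u_gt0 _] /andP[_ lt_un].
  by apply: x_sorted; lia.
- by rewrite inE; apply/andP; lia.
- by rewrite inE; apply/andP; lia.
Qed.

Section Optimal.
Variables (kb0 kb1 : nat).
Hypotheses (lt_kb0k : (kb0 < k)%N) (le_kkb1 : (k <= kb1)%N) (le_kb1n : (kb1 <= n)%N).

Local Notation th := (theta kb0 kb1).
Local Notation m := (mu kb0 kb1).

Lemma theta_opt_le a :
  (kb0 <= a < k)%N -> kkt3 k r x kb0 kb1 -> th <= theta a kb1.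
Proof.
move=> /andP[le_kb0a lt_ak] kkt3_opt.
have za : res_alpha kb0 th m = 0 by apply: res_alpha_opt.
have zb : res_beta kb0 kb1 th m = 0 by apply: res_beta_opt.
have sum_le : S_beta x kb0 a <= (a - kb0)%:R * m.
  apply: S_beta_le => i /andP[lt_kb0i le_ia].
  by apply: le_trans kkt3_opt; apply: xe_le; lia.
move: sum_le; rewrite S_beta_psum // natrB // => sum_le.
have u_le0 : res_alpha a th m <= 0 by move: za; rewrite /res_alpha; lra.
(* the sum of the two residuals does not depend on the split point *)
have v_eq : res_beta a kb1 th m = - res_alpha a th m.
  by move: za zb; rewrite /res_alpha /res_beta; lra.
have : 0 <= rho a kb1 * (theta a kb1 - th).
  rewrite (rho_theta_sub _ _ lt_ak le_kkb1 th m) v_eq.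
  have -> : a%:R * - res_alpha a th m - (k%:R - a%:R) * res_alpha a th m
            = k%:R * - res_alpha a th m by ring.
  by rewrite mulr_ge0 ?ler0n ?oppr_ge0.
by rewrite pmulr_rge0 ?rho_gt0 // subr_ge0.
Qed.

Lemma mu_le_opt b :
  (k <= b <= kb1)%N -> kkt4 k r x kb0 kb1 -> mu kb0 b <= m.
Proof.
move=> /andP[le_kb le_bkb1] kkt4_opt.
have za : res_alpha kb0 th m = 0 by apply: res_alpha_opt.
have zb : res_beta kb0 kb1 th m = 0 by apply: res_beta_opt.
have sum_ge : (kb1 - b)%:R * th <= S_beta x b kb1.
  apply: S_beta_ge => i /andP[lt_bi le_ikb1].
  by apply: le_trans kkt4_opt _; apply: xe_le; lia.
move: sum_ge; rewrite S_beta_psum // natrB // => sum_ge.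
have v_le0 : res_beta kb0 b th m <= 0 by move: zb; rewrite /res_beta; lra.
have : rho kb0 b * (mu kb0 b - m) <= 0.
  rewrite (rho_mu_sub _ _ lt_kb0k le_kb th m) za mulr0 addr0.
  by rewrite mulr_ge0_le0 ?ler0n.
by rewrite pmulr_rle0 ?rho_gt0 // subr_le0.
Qed.

Lemma esgs_reach_within a b :
  kkt_all k r x kb0 kb1 -> esgs_reach k r x a b ->
  (kb0 <= a < k)%N && (k <= b <= kb1)%N.
Proof.
move=> /and5P[_ kkt2_opt kkt3_opt kkt4_opt kkt5_opt].
elim=> [| {}a {}b _ /andP[/andP[le_kb0a lt_ak] /andP[le_kb le_bkb1]]
        | {}a {}b _ /andP[/andP[le_kb0a lt_ak] /andP[le_kb le_bkb1]]].
- by apply/andP; split; apply/andP; lia.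
- move=> _; rewrite /kkt5 negb_or -leNgt => /andP[b_neq_n le_theta_x].
  have lt_bkb1 : (b < kb1)%N.
    rewrite ltn_neqAle le_bkb1 andbT; apply/eqP => eq_b; subst b.
    move: kkt5_opt; rewrite /kkt5 (negbTE b_neq_n) /= => lt_x_theta.
    have : th <= theta a kb1 by apply: theta_opt_le => //; apply/andP.
    lra.
  by apply/andP; split; apply/andP; lia.
- rewrite /kkt2 negb_or -leNgt => /andP[a_neq0 le_x_mu].
  have lt_kb0a : (kb0 < a)%N.
    rewrite ltn_neqAle le_kb0a andbT; apply/eqP => eq_a; subst a.
    move: kkt2_opt; rewrite /kkt2 (negbTE a_neq0) /= => lt_mu_x.
    have : mu kb0 b <= m by apply: mu_le_opt => //; apply/andP.
    rewrite /mu; lra.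
  by apply/andP; split; apply/andP; lia.
Qed.

End Optimal.
End KKTSystem.

Theorem lemma3p6 (R : realFieldType) (n k : nat) (r : R) (x : n.-tuple R) :
  (2 <= n)%N -> (1 <= k <= n)%N ->
  (forall i : nat, (1 <= i < n)%N -> xe x i.+1 <= xe x i) ->
  r < \sum_(1 <= i < k.+1) xe x i ->
  forall k0 k1 : nat,
    esgs_reach k r x k0 k1 -> kkt2 k r x k0 k1 -> ~~ kkt5 k r x k0 k1 ->
  forall kb0 kb1 : nat, (kb0 < k)%N -> (k <= kb1 <= n)%N ->
    kkt_all k r x kb0 kb1 ->
    (kb0 <= k0)%N /\ (k1 <= kb1)%N.
Proof.
move=> _ _ x_sorted _ k0 k1 reach _ _ kb0 kb1 lt_kb0k /andP[le_kkb1 le_kb1n] opt.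
have /andP[/andP[le_kb0k0 _] /andP[_ le_k1kb1]] :
  (kb0 <= k0 < k)%N && (k <= k1 <= kb1)%N by move: opt reach; apply: esgs_reach_within.
by split.
Qed.
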